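(* For every integer $n\ge 0$, $$\Phi^{(3)}[a, a'; b, b'; cq^{-n}; x, y] = \frac{1}{(q/c; q)_n} \sum_{k=0}^n \begin{bmatrix} n \\ k \end{bmatrix} (-c)^{k-n} q^{\binom{n+1-k}{2}} \Phi^{(3)}[a, a'; b, b'; c; xq^k, yq^k]$$ and $$\Phi^{(3)}[a, a'; b, b'; cq^n; x, y] = \sum_{k=0}^n \begin{bmatrix} n \\ k \end{bmatrix} c^k q^{2\binom{k}{2}} (cq^k; q)_{n-k}\, \Phi^{(3)}[a, a'; b, b'; cq^k; xq^k, yq^k].$$
   Context: Let $q$ be a complex number with $0<|q|<1$. For complex $z$ and integer $m\ge 0$, $(z;q)_m=\prod_{j=0}^{m-1}(1-zq^j)$, with $(z;q)_0=1$. For integers $0\le k\le n$, $\begin{bmatrix} n \\ k \end{bmatrix}=\frac{(q;q)_n}{(q;q)_k(q;q)_{n-k}}$ is the $q$-binomial coefficient, and $\binom{j}{2}=j(j-1)/2$. The $q$-Appell function $\Phi^{(3)}$ is $$\Phi^{(3)}[a, a'; b, b'; c; x, y] = \sum_{m, n \geq 0} \frac{(a; q)_m (a'; q)_n (b; q)_m (b'; q)_n}{(q; q)_m (q; q)_n (c; q)_{m+n}} x^m y^n.$$ Identities are understood as identities of power series in $x,y$ (formal, or convergent for small $|x|,|y|$), with complex parameters chosen so that no denominator occurring vanishes. *)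

From mathcomp Require Import all_boot all_order all_algebra.
From mathcomp Require Import complex.
From mathcomp Require Import reals.
Set Implicit Arguments. Unset Strict Implicit. Unset Printing Implicit Defensive.
Import Order.TTheory GRing.Theory Num.Theory.
Local Open Scope ring_scope.
Local Open Scope complex_scope.

Definition qpoch {C : comNzRingType} (z q : C) (m : nat) : C :=
  \prod_(j < m) (1 - z * q ^+ j).

Definition qbinom {C : fieldType} (q : C) (n k : nat) : C :=
  qpoch q q n / (qpoch q q k * qpoch q q (n - k)).

(* A formal power series in two variables x, y, given by its coefficients:
   F m n is the coefficient of x^m y^n. *)
Definition fps2 (C : Type) := nat -> nat -> C.

Definition Phi3 {C : fieldType} (q a a' b b' c : C) : fps2 C :=
  fun m n => qpoch a q m * qpoch a' q n * qpoch b q m * qpoch b' q n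
             / (qpoch q q m * qpoch q q n * qpoch c q (m + n)).

(* Substitution x -> u x, y -> v y in a formal series: F(ux, vy). *)
Definition subst2 {C : comNzRingType} (u v : C) (F : fps2 C) : fps2 C :=
  fun m n => u ^+ m * v ^+ n * F m n.

From mathcomp Require Import all_boot all_order all_algebra.
From mathcomp Require Import complex reals.
From mathcomp Require Import ring zify.
Set Implicit Arguments. Unset Strict Implicit. Unset Printing Implicit Defensive.
Import Order.TTheory GRing.Theory Num.Theory.
Local Open Scope ring_scope.

(* The coefficient of x^i y^j of Phi3 depends on c only through the factor
   1/(c;q)_(i+j), and the substitution x, y -> x q^k, y q^k multiplies it by
   z^k with z = q^(i+j).  Both identities thus reduce to identities between
   q-shifted factorials in z.  The first one is Rothe's q-binomial theorem
   sum_k [n k] (-x)^k q^C(k,2) = (x;q)_n, taken at x = c z q^-n with its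
   exponents reversed, combined with the reflection
   (q/c;q)_n (-c)^n = q^C(n+1,2) (c q^-n;q)_n.  The second one is the
   identity sum_k [n k] q^(2 C(k,2)) w^k (w q^k;q)_(n-k) = 1 at w = c z, which
   follows from the q-Pascal rule by induction on n. *)

Section QPochhammer.
Variables (C : comNzRingType) (q : C).

Lemma qpoch0 z : qpoch z q 0 = 1.
Proof. by rewrite /qpoch big_ord0. Qed.

Lemma qpoch0z m : qpoch 0 q m = 1.
Proof. by rewrite /qpoch big1 // => j _; rewrite mul0r subr0. Qed.

Lemma qpochSr z m : qpoch z q m.+1 = qpoch z q m * (1 - z * q ^+ m).
Proof. by rewrite /qpoch big_ord_recr. Qed.

Lemma qpochSl z m : qpoch z q m.+1 = (1 - z) * qpoch (z * q) q m.
Proof.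
rewrite /qpoch big_ord_recl expr0 mulr1; congr (_ * _).
by apply: eq_bigr => j _; rewrite /bump /= exprS mulrA.
Qed.

Lemma qpochD z m l : qpoch z q (m + l) = qpoch z q m * qpoch (z * q ^+ m) q l.
Proof.
rewrite /qpoch big_split_ord; congr (_ * _).
by apply: eq_bigr => j _; rewrite /= exprD mulrA.
Qed.

Lemma qpoch_shift z m l :
  qpoch z q m * qpoch (z * q ^+ m) q l = qpoch z q l * qpoch (z * q ^+ l) q m.
Proof. by rewrite -!qpochD addnC. Qed.

Lemma prod_qpow_sub_qpoch d n :
  \prod_(j < n) (q ^+ j.+1 - d * q ^+ n) = q ^+ 'C(n.+1, 2) * qpoch d q n.
Proof.
elim: n d => [|n IHn] d; first by rewrite big_ord0 qpoch0 bin_small // mulr1.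
rewrite big_ord_recl.
under eq_bigr do rewrite /bump /= [_ ^+ _.+2]exprS [q ^+ n.+1]exprS mulrCA -mulrBr.
rewrite big_split /= prodr_const card_ord IHn qpochSr (binS n.+1) bin1 exprD !exprS.
ring.
Qed.

End QPochhammer.

(* The q-binomial coefficients via the q-Pascal rule: unlike [qbinom], this
   needs no division. *)
Section GaussianBinomial.
Variables (C : comNzRingType) (q : C).

Fixpoint qbin (n k : nat) : C :=
  match n, k with
  | _, 0 => 1
  | 0, _.+1 => 0
  | n'.+1, k'.+1 => qbin n' k' + q ^+ k'.+1 * qbin n' k'.+1
  end.

Lemma qbinn0 n : qbin n 0 = 1.
Proof. by case: n. Qed.

Lemma qbin_small n k : (n < k)%N -> qbin n k = 0.
Proof.
elim: n k => [|n IHn] [|k] //= ltnk.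
by rewrite !IHn ?mulr0 ?addr0 // ltnW.
Qed.

Lemma qbinnn n : qbin n n = 1.
Proof. by elim: n => //= n ->; rewrite qbin_small // mulr0 addr0. Qed.

Lemma qbinSn n k : qbin n.+1 k = (if k is k'.+1 then qbin n k' else 0) + q ^+ k * qbin n k.
Proof. by case: k => [|k] //=; rewrite qbinn0 add0r mul1r. Qed.

Lemma sum_qbinS n (F : nat -> C) :
  \sum_(k < n.+2) qbin n.+1 k * F k =
  \sum_(k < n.+1) qbin n k * F k.+1 + \sum_(k < n.+1) q ^+ k * qbin n k * F k.
Proof.
under eq_bigr do rewrite qbinSn mulrDl.
rewrite big_split /=; congr (_ + _).
  by rewrite big_ord_recl /= mul0r add0r.
by rewrite big_ord_recr /= qbin_small // mulr0 mul0r addr0.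
Qed.

Lemma qbin_qpoch k l :
  qbin (k + l) k * (qpoch q q k * qpoch q q l) = qpoch q q (k + l).
Proof.
elim: k l => [|k IHk] l; first by rewrite qbinn0 qpoch0 !mul1r.
elim: l => [|l IHl]; first by rewrite addn0 qbinnn qpoch0 mul1r mulr1.
rewrite addSn /=; set n := (k + l.+1)%N.
have IHl' := IHl; rewrite addSnnS -/n in IHl'.
have qpow_n : q * q ^+ n = q ^+ k.+1 * q ^+ l.+1 by rewrite -exprS -exprD -addSn.
transitivity (qbin n k * (qpoch q q k * qpoch q q l.+1) * (1 - q * q ^+ k) +
  q ^+ k.+1 * (1 - q * q ^+ l) * (qbin n k.+1 * (qpoch q q k.+1 * qpoch q q l))).
  by rewrite !qpochSr; ring.
by rewrite IHk IHl' qpochSr qpow_n !exprS; ring.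
Qed.

Lemma qbin_theorem n x :
  \sum_(k < n.+1) qbin n k * ((- x) ^+ k * q ^+ 'C(k, 2)) = qpoch x q n.
Proof.
elim: n x => [|n IHn] x; first by rewrite big_ord1 qpoch0 /= !mulr1.
rewrite (sum_qbinS n (fun k => (- x) ^+ k * q ^+ 'C(k, 2))) qpochSl -IHn.
rewrite mulr_sumr -big_split /=.
apply: eq_bigr => k _.
rewrite binS bin1 exprD exprS -mulNr exprMn; ring.
Qed.

Lemma bin2_reflect n k : (k <= n)%N ->
  (n * k + 'C(n.+1 - k, 2) = 'C(n.+1, 2) + 'C(k, 2))%N.
Proof.
elim: k => [|k IHk] lekn; first by rewrite muln0 subn0 bin0n addn0.
have := IHk (ltnW lekn).
rewrite subSn 1?ltnW // subSS binS bin1 (binS k) bin1 mulnS; lia.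
Qed.

Lemma qbin_theorem_rev n x :
  \sum_(k < n.+1) qbin n k * (- (x * q ^+ n)) ^+ k * q ^+ 'C(n.+1 - k, 2) =
  q ^+ 'C(n.+1, 2) * qpoch x q n.
Proof.
rewrite -qbin_theorem mulr_sumr; apply: eq_bigr => [[k /= ltkn]] _.
have qpow_reflect : q ^+ (n * k) * q ^+ 'C(n.+1 - k, 2) = q ^+ 'C(n.+1, 2) * q ^+ 'C(k, 2).
  by rewrite -!exprD bin2_reflect.
by rewrite -mulNr exprMn -exprM -!mulrA qpow_reflect; ring.
Qed.

Lemma sum_qbin_qpoch_tail n w :
  \sum_(k < n.+1)
    qbin n k * (q ^+ (2 * 'C(k, 2)) * w ^+ k * qpoch (w * q ^+ k) q (n - k)) = 1.
Proof.
elim: n w => [|n IHn] w; first by rewrite big_ord1 /= qpoch0 !mulr1.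
rewrite (sum_qbinS n (fun k =>
  q ^+ (2 * 'C(k, 2)) * w ^+ k * qpoch (w * q ^+ k) q (n.+1 - k))).
rewrite -(IHn (w * q)) -big_split /=.
apply: eq_bigr => [[k /= ltkn]] _.
rewrite subSS subSn // qpochSl binS bin1 mulnDr exprD exprS -!mulrA -exprSr -exprS.
by rewrite exprMn (mul2n k) -addnn exprD; ring.
Qed.

End GaussianBinomial.

Section QBinomial.
Variables (C : fieldType) (q : C).
Hypotheses (q_neq0 : q != 0) (qq_neq0 : forall m, qpoch q q m != 0).

Lemma qbinomE n k : (k <= n)%N -> qbinom q n k = qbin q n k.
Proof.
move=> lekn; rewrite /qbinom -(subnKC lekn) -qbin_qpoch addKn.
by rewrite mulfK // mulf_neq0.
Qed.

Lemma qpoch_reflect c n : c != 0 ->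
  qpoch (q / c) q n * (- c) ^+ n = q ^+ 'C(n.+1, 2) * qpoch (c * q ^- n) q n.
Proof.
move=> c0; rewrite -prod_qpow_sub_qpoch mulfVK ?expf_neq0 //.
rewrite /qpoch -[n in (- c) ^+ n](card_ord n) -prodr_const -big_split /=.
by apply: eq_bigr => j _; rewrite exprS; field.
Qed.

Lemma inv_qpoch_lowered c n N : c != 0 ->
  qpoch c q N != 0 -> qpoch (c * q ^- n) q N != 0 -> qpoch (q / c) q n != 0 ->
  (qpoch (c * q ^- n) q N)^-1 =
  (qpoch (q / c) q n)^-1 *
    \sum_(k < n.+1) qbinom q n k * (- c) ^ (k%:Z - n%:Z) * q ^+ 'C(n.+1 - k, 2)
      * ((q ^+ N) ^+ k / qpoch c q N).
Proof.
move=> c0 cN dN qc_n; set d := c * q ^- n in dN *.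
have Nc0 : - c != 0 by rewrite oppr_eq0.
have cE : c = d * q ^+ n by rewrite /d mulfVK // expf_neq0.
have reflect_c : qpoch (q / c) q n = q ^+ 'C(n.+1, 2) * qpoch d q n / (- c) ^+ n.
  by rewrite -qpoch_reflect // mulfK // expf_neq0.
have d_n : qpoch d q n != 0.
  by apply: contraNneq qc_n => dn0; rewrite reflect_c dn0 !(mulr0, mul0r).
have shift_d : qpoch (d * q ^+ N) q n = qpoch d q n * qpoch c q N / qpoch d q N.
  by rewrite cE -qpoch_shift [qpoch d q N * _]mulrC mulfK.
rewrite (eq_bigr (fun k : 'I_n.+1 => ((- c) ^+ n)^-1 / qpoch c q N *
    (qbin q n k * (- (d * q ^+ N * q ^+ n)) ^+ k * q ^+ 'C(n.+1 - k, 2)))).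
  rewrite -mulr_sumr qbin_theorem_rev shift_d reflect_c.
  by field; rewrite dN cN d_n !expf_neq0.
move=> [k /= ltkn] _.
rewrite qbinomE // expfzDr // -exprnP -exprnN [d * _ * _]mulrAC -cE -mulNr exprMn; ring.
Qed.

Lemma inv_qpoch_raised c n N :
  (forall k, (k <= n)%N -> qpoch (c * q ^+ k) q N != 0) ->
  (qpoch (c * q ^+ n) q N)^-1 =
  \sum_(k < n.+1) qbinom q n k * c ^+ k * q ^+ (2 * 'C(k, 2))
    * qpoch (c * q ^+ k) q (n - k) * ((q ^+ N) ^+ k / qpoch (c * q ^+ k) q N).
Proof.
move=> cN.
rewrite (eq_bigr (fun k : 'I_n.+1 => (qpoch (c * q ^+ n) q N)^-1 * (qbin q n k *
    (q ^+ (2 * 'C(k, 2)) * (c * q ^+ N) ^+ k * qpoch (c * q ^+ N * q ^+ k) q (n - k))))).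
  by rewrite -mulr_sumr sum_qbin_qpoch_tail mulr1.
move=> [k /= ltkn] _.
have shift_k := qpoch_shift q (c * q ^+ k) (n - k) N.
rewrite -mulrA -exprD subnKC // [c * q ^+ k * q ^+ N]mulrAC in shift_k.
have tail_k : qpoch (c * q ^+ k) q (n - k) = qpoch (c * q ^+ k) q N
    * qpoch (c * q ^+ N * q ^+ k) q (n - k) / qpoch (c * q ^+ n) q N.
  by rewrite -shift_k mulfK ?cN.
rewrite qbinomE // tail_k exprMn.
by field; rewrite !cN.
Qed.

End QBinomial.

Lemma qpoch_qq_neq0 (R : numDomainType) (q : R) m : `|q| < 1 -> qpoch q q m != 0.
Proof.
move=> q_lt1; apply/prodf_neq0 => j _; rewrite -exprS subr_eq0 eq_sym.
apply/eqP => qj1; have := exprn_ilt1 j.+1 (normr_ge0 q) q_lt1.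
by rewrite -normrX qj1 normr1 ltxx.
Qed.

Section Phi3.
Variables (C : fieldType) (q a a' b b' : C).

Lemma Phi3E c i j : Phi3 q a a' b b' c i j = Phi3 q a a' b b' 0 i j / qpoch c q (i + j).
Proof. by rewrite /Phi3 qpoch0z mulr1 invfM mulrA. Qed.

Lemma subst2_Phi3 c k i j :
  subst2 (q ^+ k) (q ^+ k) (Phi3 q a a' b b' c) i j =
  Phi3 q a a' b b' 0 i j * ((q ^+ (i + j)) ^+ k / qpoch c q (i + j)).
Proof.
rewrite /subst2 Phi3E mulrCA mulrA -!exprM -exprD -mulnDr mulnC exprM.
by rewrite mulrA.
Qed.

End Phi3.

Theorem theorem13 (R : realType) (q a a' b b' c : R[i]) (n : nat) :
  0 < `|q| < 1 ->
  ((c != 0 ->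
    (forall j : nat, qpoch c q j != 0) ->
    (forall j : nat, qpoch (c * q ^- n) q j != 0) ->
    qpoch (q / c) q n != 0 ->
    forall i j : nat,
     Phi3 q a a' b b' (c * q ^- n) i j =
     (qpoch (q / c) q n)^-1 *
       \sum_(k < n.+1) qbinom q n k * (- c) ^ (k%:Z - n%:Z)
          * q ^+ 'C(n.+1 - k, 2)
          * subst2 (q ^+ k) (q ^+ k) (Phi3 q a a' b b' c) i j)
  /\
   ((forall k j : nat, (k <= n)%N -> qpoch (c * q ^+ k) q j != 0) ->
    forall i j : nat,
     Phi3 q a a' b b' (c * q ^+ n) i j =
     \sum_(k < n.+1) qbinom q n k * c ^+ k * q ^+ (2 * 'C(k, 2))
          * qpoch (c * q ^+ k) q (n - k)
          * subst2 (q ^+ k) (q ^+ k) (Phi3 q a a' b b' (c * q ^+ k)) i j)).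
Proof.
move=> /andP[q_gt0 q_lt1].
have q_neq0 : q != 0 by rewrite -normr_gt0.
have qq_neq0 m := qpoch_qq_neq0 m q_lt1.
split=> [c0 cN dN qc_n | cN] i j.
- under eq_bigr do rewrite subst2_Phi3 mulrCA.
  rewrite -mulr_sumr Phi3E [RHS]mulrCA; congr (_ * _).
  exact: inv_qpoch_lowered.
- under eq_bigr do rewrite subst2_Phi3 mulrCA.
  rewrite -mulr_sumr Phi3E; congr (_ * _).
  by apply: inv_qpoch_raised => // k; apply: cN.
Qed.
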